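(* Let $\mathcal I=\{x_0,x_1,x_2,\ldots\}$ be the standard infinite generating set of Thompson's group $F$ and let $T_1,T_2$ be finite rooted binary trees each with $n$ nodes. Then $d_{RA}(T_1,T_2)=|(T_1,T_2)|_{\mathcal I}$, where $|(T_1,T_2)|_{\mathcal I}$ is the word length, with respect to $\mathcal I$, of the element of $F$ represented by the tree pair diagram $(T_1,T_2)$.
   Context: Trees: finite rooted binary trees, each internal vertex (node) having a left and a right child; a tree with $n$ nodes has $n+1$ leaves numbered $0,\ldots,n$ from left to right. The right arm consists of the root and all nodes reachable from it by right edges only. Right rotation at a node $N$ whose left child $M$ is a node (with $A,B$ the subtrees of $M$, $C$ the right subtree of $N$) replaces the subtree at $N$ by one whose root has left subtree $A$ and right child a node with subtrees $B,C$; left rotation is the inverse. The right-arm rotation distance $d_{RA}(T_1,T_2)$ is the minimal number of rotations, each performed at a node on the right arm, needed to transform $T_1$ into $T_2$. Thompson's group $F=\langle x_0,x_1,\ldots\mid x_i^{-1}x_nx_i=x_{n+1}\ (i<n)\rangle$. The leaf exponent of leaf $k$ in a tree is the length of the longest upward path of left edges from leaf $k$ none of whose vertices lies on the right arm. The tree pair diagram $(T_1,T_2)$ represents the element of $F$ given by the word $x_0^{f_0}\cdots x_n^{f_n}x_n^{-e_n}\cdots x_0^{-e_0}$, where $e_i$, $f_i$ are the leaf exponents of leaf $i$ in $T_1$, $T_2$. Word length with respect to a generating set is the length of a shortest word in the generators and their inverses representing the element. *)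

From mathcomp Require Import all_boot.
Set Implicit Arguments. Unset Strict Implicit. Unset Printing Implicit Defensive.

Inductive tree : Type := Leaf | Node of tree & tree.

Fixpoint nodes (t : tree) : nat :=
  match t with Leaf => 0 | Node l r => (nodes l + nodes r).+1 end.

Inductive rot_root : tree -> tree -> Prop :=
| RotRight A B C : rot_root (Node (Node A B) C) (Node A (Node B C))
| RotLeft  A B C : rot_root (Node A (Node B C)) (Node (Node A B) C).

Inductive ra_step : tree -> tree -> Prop :=
| RAroot t t' : rot_root t t' -> ra_step t t'
| RAright A r r' : ra_step r r' -> ra_step (Node A r) (Node A r').

Inductive ra_path : nat -> tree -> tree -> Prop :=
| RAP0 t : ra_path 0 t t
| RAPS k t u v : ra_step t u -> ra_path k u v -> ra_path k.+1 t v.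

Definition ra_dist_is (T1 T2 : tree) (d : nat) : Prop :=
  ra_path d T1 T2 /\ forall k, ra_path k T1 T2 -> d <= k.

(* lpath t : for each leaf of t (left to right), the number of edges of the
   maximal upward path of left edges from that leaf staying inside t. *)
Fixpoint lpath (t : tree) : seq nat :=
  match t with
  | Leaf => [:: 0]
  | Node l r =>
      let s := lpath l in (head 0 s).+1 :: behead s ++ lpath r
  end.

(* leaf exponents of a tree: the upward left paths may not contain any
   vertex of the right arm (root and its iterated right children). *)
Fixpoint leaf_exps (t : tree) : seq nat :=
  match t with
  | Leaf => [:: 0]
  | Node l r => lpath l ++ leaf_exps r
  end.

(* A letter (i, true) is x_i, (i, false) is x_i^{-1}. *)
Definition letter := (nat * bool)%type.
Definition word := seq letter.

Inductive feq : word -> word -> Prop :=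
| feq_refl u : feq u u
| feq_sym u v : feq u v -> feq v u
| feq_trans u v w : feq u v -> feq v w -> feq u w
| feq_cong a b u v : feq u v -> feq (a ++ u ++ b) (a ++ v ++ b)
| feq_free i s : feq [:: (i, s); (i, ~~ s)] [::]
| feq_rel i n : i < n ->
    feq [:: (i, false); (n, true); (i, true)] [:: (n.+1, true)].

Definition wlen_is (w : word) (d : nat) : Prop :=
  (exists u : word, size u = d /\ feq u w) /\
  forall u : word, feq u w -> d <= size u.

(* The word x_0^{f_0} ... x_n^{f_n} x_n^{-e_n} ... x_0^{-e_0} of the
   tree pair diagram (T1,T2), e = leaf exponents of T1, f = of T2. *)
Definition tpd_word (T1 T2 : tree) : word :=
  let e := leaf_exps T1 in
  let f := leaf_exps T2 in
  flatten [seq nseq (nth 0 f i) (i, true) | i <- iota 0 (size f)] ++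
  flatten [seq nseq (nth 0 e i) (i, false) | i <- rev (iota 0 (size e))].

From mathcomp Require Import all_boot zify.
From Stdlib Require Import FunctionalExtensionality.
Set Implicit Arguments. Unset Strict Implicit. Unset Printing Implicit Defensive.

(* Write the element of (T1, T2) as [arm_word T2 0 * (arm_word T1 0)^-1].  A
   right-arm rotation of T2 multiplies it by a single generator, so a rotation
   path of length k gives a word of length k.  Conversely, F acts on forests
   of dyadic intervals ([x_i] joins the trees at positions i and i+1, reducing
   a caret over two sibling intervals), and the cost of a forest -- its number
   of carets plus, for each leaf, the number of times in a row that its
   interval is a left half -- changes by at most one per generator and is zero
   on the trivial forest.  So every word for the element is at least as long
   as the cost c of the image of the trivial forest, which is computed along
   the right arm of T2.  Finally, while c > 0 some right-arm rotation of T2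
   lowers c (a right rotation where the graft of a left subtree keeps a
   caret, a left rotation merging two sibling intervals otherwise), and c = 0
   forces T2 = T1; hence d_RA <= c <= word length <= d_RA. *)

Definition inv_letter (a : letter) : letter := (a.1, ~~ a.2).
Definition inv_word (u : word) : word := rev (map inv_letter u).

Lemma inv_word_cat u v : inv_word (u ++ v) = inv_word v ++ inv_word u.
Proof. by rewrite /inv_word map_cat rev_cat. Qed.

Lemma feq_catl p u v : feq u v -> feq (p ++ u) (p ++ v).
Proof. by move=> h; have := feq_cong p [::] h; rewrite !cats0. Qed.

Lemma feq_catr q u v : feq u v -> feq (u ++ q) (v ++ q).
Proof. by move=> h; have := feq_cong [::] q h. Qed.

Lemma feq_cons a u v : feq u v -> feq (a :: u) (a :: v).
Proof. exact: (feq_catl [:: a]). Qed.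

Lemma feq_cancel a u : feq (a :: inv_letter a :: u) u.
Proof. by case: a => i s; have := feq_catr u (feq_free i s). Qed.

Lemma feq_cancel_inv a u : feq (inv_letter a :: a :: u) u.
Proof. by case: a => i s; have := feq_catr u (feq_free i (~~ s)); rewrite negbK. Qed.

Lemma feq_cat_inv_word u : feq (u ++ inv_word u) [::].
Proof.
elim: u => [|a u IH] /=; first exact: feq_refl.
rewrite /inv_word /= rev_cons -cats1 -/(inv_word u) catA.
exact: feq_trans (feq_cons _ (feq_catr _ IH)) (feq_cancel a [::]).
Qed.

Lemma feq_commute i n b : i < n -> feq [:: (i, true); (n.+1, b)] [:: (n, b); (i, true)].
Proof.
move=> lt_in.
have pos : feq [:: (i, true); (n.+1, true)] [:: (n, true); (i, true)].
  apply: feq_sym; apply: feq_trans (feq_sym (feq_cancel (i, true) _)) _.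
  exact: feq_cons (feq_rel lt_in).
case: b => //.
apply: feq_trans (feq_sym (feq_cancel_inv (n, true) [:: (i, true); (n.+1, false)])) _.
apply: feq_trans (feq_cong [:: (n, false)] [:: (n.+1, false)] (feq_sym pos)) _ => /=.
exact: (feq_catl [:: (n, false); (i, true)] (feq_cancel (n.+1, true) [::])).
Qed.

Fixpoint leaves (t : tree) : nat :=
  if t is Node a b then leaves a + leaves b else 1.

Lemma leaves_gt0 t : 0 < leaves t.
Proof. elim: t => //= a IHa b IHb; lia. Qed.

Lemma leaves_nodes t : leaves t = (nodes t).+1.
Proof. elim: t => //= a IHa b IHb; lia. Qed.

Fixpoint caret_word (t : tree) (o : nat) : word :=
  if t is Node a b then (o, true) :: caret_word a o ++ caret_word b (o + leaves a)
  else [::].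

Fixpoint arm_word (t : tree) (o : nat) : word :=
  if t is Node l r then caret_word l o ++ arm_word r (o + leaves l) else [::].

Fixpoint exp_word (s : seq nat) (o : nat) : word :=
  if s is e :: s' then nseq e (o, true) ++ exp_word s' o.+1 else [::].

Lemma exp_word_cat s1 s2 o : exp_word (s1 ++ s2) o = exp_word s1 o ++ exp_word s2 (o + size s1).
Proof. by elim: s1 o => [|e s IH] o /=; rewrite ?addn0 // IH catA addSnnS. Qed.

Lemma size_lpath t : size (lpath t) = leaves t.
Proof.
elim: t => //= a IHa b IHb; rewrite size_cat size_behead IHa IHb.
have := leaves_gt0 a; lia.
Qed.

Lemma exp_word_lpath t o : exp_word (lpath t) o = caret_word t o.
Proof.
elim: t o => //= a IHa b IHb o.
case E: (lpath a) (IHa o) (size_lpath a) => [|h s] /= <- size_a.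
  by have := leaves_gt0 a; lia.
by rewrite exp_word_cat IHb -catA -size_a addSnnS.
Qed.

Lemma exp_word_leaf_exps t o : exp_word (leaf_exps t) o = arm_word t o.
Proof. by elim: t o => //= l _ r IH o; rewrite exp_word_cat exp_word_lpath size_lpath IH. Qed.

Lemma flatten_exp_word f o :
  flatten [seq nseq (nth 0 f (i - o)) (i, true) | i <- iota o (size f)] = exp_word f o.
Proof.
elim: f o => [|e f IH] o //=; rewrite subnn /= -IH; congr (_ ++ flatten _).
apply/eq_in_map => i; rewrite mem_iota => /andP[le_oi _].
by rewrite (_ : i - o = (i - o.+1).+1) //; lia.
Qed.

Lemma flatten_rev_inv (F : nat -> nat) s :
  flatten [seq nseq (F i) (i, false) | i <- rev s] =
  inv_word (flatten [seq nseq (F i) (i, true) | i <- s]).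
Proof.
elim: s => [|a s IH] //=.
by rewrite rev_cons map_rcons flatten_rcons IH inv_word_cat /inv_word map_nseq rev_nseq.
Qed.

Lemma tpd_wordE T1 T2 : tpd_word T1 T2 = arm_word T2 0 ++ inv_word (arm_word T1 0).
Proof.
rewrite /tpd_word -!exp_word_leaf_exps -!(flatten_exp_word _ 0) flatten_rev_inv.
by congr (_ ++ _); [|congr inv_word]; congr flatten; apply: eq_map => i; rewrite subn0.
Qed.

(** * Right-arm rotations as generators *)

Lemma caret_word_commute t o k b :
  feq (caret_word t o ++ [:: (o + leaves t + k, b)]) (((o + k).+1, b) :: caret_word t o).
Proof.
elim: t o k => [|l IHl r IHr] o k /=; first by rewrite addn1 addSn; apply: feq_refl.
rewrite -catA (_ : o + (leaves l + leaves r) + k = o + leaves l + leaves r + k); last by lia.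
apply: feq_trans (feq_cons _ (feq_catl _ (IHr _ _))) _.
rewrite (_ : ((o + leaves l + k).+1, b) = (o + leaves l + k.+1, b)); last by rewrite addnS.
rewrite -[_ :: caret_word r _]cat1s catA.
apply: feq_trans (feq_cons _ (feq_catr _ (IHl _ _))) _.
rewrite -addnS.
have := feq_catr (caret_word l o ++ caret_word r (o + leaves l))
  (@feq_commute o (o + k).+1 b (_ : o < (o + k).+1)).
by rewrite /= !addnS => h; apply: h; lia.
Qed.

Lemma ra_step_arm_word T T' : ra_step T T' ->
  forall o, exists i b, feq (arm_word T o) ((o + i, b) :: arm_word T' o).
Proof.
elim=> {T T'} [t t' [] A B C|A r r' _ IH] o.
- by exists 0, true; rewrite addn0 /= -!catA -addnA; apply: feq_refl.
- exists 0, false; rewrite addn0 /= -!catA -addnA.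
  exact: feq_sym (feq_cancel_inv (o, true) _).
- have [i [b eq_r]] := IH (o + leaves A); exists i.+1, b => /=.
  apply: feq_trans (feq_catl _ eq_r) _; rewrite -cat1s catA.
  by have := feq_catr (arm_word r' (o + leaves A)) (caret_word_commute A o i b); rewrite addnS.
Qed.

Lemma ra_path_arm_word k T T' : ra_path k T T' ->
  exists u : word, size u = k /\ feq (arm_word T' 0) (u ++ arm_word T 0).
Proof.
elim=> {k T T'} [t|k t t' t'' step _ [u [size_u eq_u]]].
  by exists [::]; split => //; apply: feq_refl.
have [i [b eq_step]] := ra_step_arm_word step 0.
exists (rcons u (inv_letter (0 + i, b))); split; first by rewrite size_rcons size_u.
apply: feq_trans eq_u _; rewrite -cats1 -catA; apply: feq_catl => /=.
exact: feq_sym (feq_trans (feq_cons _ eq_step) (feq_cancel_inv _ _)).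
Qed.

Lemma ra_path_tpd_word k T1 T2 : ra_path k T1 T2 ->
  exists u : word, size u = k /\ feq u (tpd_word T1 T2).
Proof.
case/ra_path_arm_word => u [size_u eq_u]; exists u; split => //.
apply: feq_sym; rewrite tpd_wordE.
apply: feq_trans (feq_catr _ eq_u) _; rewrite -catA.
by have := feq_catl u (feq_cat_inv_word (arm_word T1 0)); rewrite cats0.
Qed.

Lemma ra_step_sym T T' : ra_step T T' -> ra_step T' T.
Proof.
elim=> {T T'} [t t' [] A B C|A r r' _ IH]; last exact: RAright.
all: by apply: RAroot; constructor.
Qed.

Lemma ra_path_rcons k T U V : ra_path k T U -> ra_step U V -> ra_path k.+1 T V.
Proof.
elim=> {k T U} [t|k t u v step _ IH] last_step; first exact: RAPS last_step (RAP0 _).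
exact: RAPS step (IH last_step).
Qed.

Lemma ra_path_sym k T U : ra_path k T U -> ra_path k U T.
Proof.
elim=> {k T U} [t|k t u v step _ IH]; first exact: RAP0.
exact: ra_path_rcons IH (ra_step_sym step).
Qed.

Lemma ra_step_nodes T T' : ra_step T T' -> nodes T' = nodes T.
Proof. by elim=> {T T'} [t t' [] A B C|A r r' _ /= ->] /=; lia. Qed.

(** * The action of F on forests *)

(* [DLeaf k s] is the dyadic subinterval of [k, k + 1] with address [s],
   innermost bisection first ([false] = left half); a forest assigns a
   tree of such intervals to every position. *)
Inductive dtree : Type := DLeaf of nat & seq bool | DNode of dtree & dtree.

Definition forest := nat -> dtree.

Definition siblings (a b : dtree) : bool :=
  match a, b with
  | DLeaf k (false :: s), DLeaf k' (true :: s') => (k == k') && (s == s')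
  | _, _ => false
  end.

Definition parent (a : dtree) : dtree :=
  if a is DLeaf k (_ :: s) then DLeaf k s else a.

Definition join (a b : dtree) : dtree := if siblings a b then parent a else DNode a b.

Definition split_tree (t : dtree) : dtree * dtree :=
  match t with
  | DNode a b => (a, b)
  | DLeaf k s => (DLeaf k (false :: s), DLeaf k (true :: s))
  end.

Fixpoint reduced (t : dtree) : bool :=
  if t is DNode a b then [&& reduced a, reduced b & ~~ siblings a b] else true.

Definition reduced_forest (f : forest) : Prop := forall j, reduced (f j).

Definition join_at (i : nat) (f : forest) : forest := fun j =>
  if j < i then f j else if j == i then join (f i) (f i.+1) else f j.+1.

Definition split_at (i : nat) (f : forest) : forest := fun j =>
  if j < i then f j else if j == i then (split_tree (f i)).1
  else if j == i.+1 then (split_tree (f i)).2 else f j.-1.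

Definition act_letter (a : letter) (f : forest) : forest :=
  if a.2 then join_at a.1 f else split_at a.1 f.

Definition act (u : word) (f : forest) : forest := foldr act_letter f u.

Definition unit_forest : forest := fun j => DLeaf j [::].

Ltac case_ifs := repeat match goal with
  | |- context [if ?c then _ else _] => let E := fresh "E" in case E: c
  end.

Ltac subst_eqs := repeat match goal with H : (_ == _) = true |- _ => move/eqP: H => H; subst end.

Lemma act_cat u v f : act (u ++ v) f = act u (act v f).
Proof. exact: foldr_cat. Qed.

Lemma split_join a b : split_tree (join a b) = (a, b).
Proof.
rewrite /join; case: a => [k [|[] s]|? ?]; case: b => [k' [|[] s']|? ?] //=.
by case: eqP => [->|] //=; case: eqP => [->|].
Qed.

Lemma join_split t : reduced t -> join (split_tree t).1 (split_tree t).2 = t.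
Proof.
rewrite /join; case: t => [k s|a b] /=; first by rewrite !eqxx.
by case/and3P => _ _ /negbTE ->.
Qed.

Lemma reduced_join a b : reduced a -> reduced b -> reduced (join a b).
Proof.
rewrite /join; case sib: (siblings a b) => /= red_a red_b; last by rewrite red_a red_b sib.
by case: a red_a sib => [k [|? ?]|? ?].
Qed.

Lemma reduced_split t : reduced t -> reduced (split_tree t).1 /\ reduced (split_tree t).2.
Proof. by case: t => [//|a b] /= /and3P[]. Qed.

Lemma join_at_split_at i f : reduced_forest f -> join_at i (split_at i f) = f.
Proof.
move=> red_f; apply: functional_extensionality => j; rewrite /join_at /split_at.
by case_ifs; try (exfalso; lia); subst_eqs; rewrite ?join_split.
Qed.

Lemma split_at_join_at i f : split_at i (join_at i f) = f.
Proof.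
apply: functional_extensionality => j; rewrite /join_at /split_at.
by case_ifs; try (exfalso; lia); subst_eqs; rewrite ?split_join //; congr f; lia.
Qed.

Lemma act_letter_inv a f : reduced_forest f -> act_letter (inv_letter a) (act_letter a f) = f.
Proof.
case: a => i [] red_f; rewrite /act_letter /=; first exact: split_at_join_at.
exact: join_at_split_at.
Qed.

Lemma reduced_act_letter a f : reduced_forest f -> reduced_forest (act_letter a f).
Proof.
case: a => i [] red_f j; rewrite /act_letter /= /join_at /split_at; case_ifs => //.
all: by [apply: reduced_join | case: (reduced_split (red_f i))].
Qed.

Lemma reduced_act u f : reduced_forest f -> reduced_forest (act u f).
Proof. by elim: u => //= a u IH red_f; apply/reduced_act_letter/IH. Qed.

Lemma act_inv_word u f : reduced_forest f -> act (inv_word u) (act u f) = f.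
Proof.
elim: u f => [|a u IH] f red_f //=.
rewrite /inv_word /= rev_cons -cats1 act_cat /= act_letter_inv; first exact: IH.
exact: reduced_act.
Qed.

Lemma act_rel i n f : i < n ->
  act [:: (i, false); (n, true); (i, true)] f = act [:: (n.+1, true)] f.
Proof.
move=> lt_in; apply: functional_extensionality => j.
rewrite /= /act_letter /= /join_at /split_at.
case_ifs; try (exfalso; lia); subst_eqs; rewrite ?split_join //; try (congr f; lia).
all: by congr join; congr f; lia.
Qed.

Lemma act_feq u v f : feq u v -> reduced_forest f -> act u f = act v f.
Proof.
move=> eq_uv; elim: eq_uv f => {u v}.
- by [].
- by move=> u v _ IH f red_f; rewrite IH.
- by move=> u v w _ IH1 _ IH2 f red_f; rewrite IH1 // IH2.
- by move=> a b u v _ IH f red_f; rewrite !act_cat IH //; apply: reduced_act.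
- by move=> i s f red_f; have := act_letter_inv (i, ~~ s) red_f; rewrite /inv_letter /= negbK.
- by move=> i n lt_in f _; apply: act_rel.
Qed.

(** * A cost bounding word length *)

Fixpoint left_depth (s : seq bool) : nat :=
  if s is false :: s' then (left_depth s').+1 else 0.

Fixpoint cost (t : dtree) : nat :=
  match t with DLeaf _ s => left_depth s | DNode a b => (cost a + cost b).+1 end.

Definition shift (f : forest) (k : nat) : forest := fun j => f (k + j).

Definition prefix_cost (N : nat) (f : forest) : nat := \sum_(j < N) cost (f j).

Definition cost_free_from (f : forest) (M : nat) : Prop :=
  forall j, M <= j -> cost (f j) = 0.

Lemma cost_join a b : cost (join a b) <= (cost a + cost b).+1.
Proof.
rewrite /join; case sib: (siblings a b) => //.
by case: a b sib => [k [|[] s]|? ?] [k' [|[] s']|? ?] //= _; lia.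
Qed.

Lemma cost_split t : cost (split_tree t).1 + cost (split_tree t).2 <= (cost t).+1.
Proof. by case: t => [k s|a b] /=; lia. Qed.

Lemma shift0 f : shift f 0 = f.
Proof. exact: functional_extensionality. Qed.

Lemma shift_shift f a b : shift (shift f a) b = shift f (a + b).
Proof. by apply: functional_extensionality => j; rewrite /shift addnA. Qed.

Lemma prefix_cost_ext N f g : (forall j, j < N -> f j = g j) -> prefix_cost N f = prefix_cost N g.
Proof. by move=> eq_fg; apply: eq_bigr => j _; rewrite eq_fg. Qed.

Lemma prefix_cost_add a b f : prefix_cost (a + b) f = prefix_cost a f + prefix_cost b (shift f a).
Proof. by rewrite /prefix_cost big_split_ord. Qed.

Lemma prefix_cost0 f : prefix_cost 0 f = 0.
Proof. exact: big_ord0. Qed.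

Lemma prefix_cost_free f M N : cost_free_from f M -> M <= N -> prefix_cost N f = prefix_cost M f.
Proof.
move=> free le_MN; rewrite -(subnKC le_MN) prefix_cost_add.
by rewrite [prefix_cost _ (shift f M)]big1 ?addn0 // => j _; apply: free; lia.
Qed.

Lemma prefix_cost_splice i a b n f g :
  (forall j, j < i -> g j = f j) -> (forall j, g (i + a + j) = f (i + b + j)) ->
  prefix_cost (i + a + n) g + prefix_cost b (shift f i) =
  prefix_cost (i + b + n) f + prefix_cost a (shift g i).
Proof.
move=> low high; rewrite -!addnA !prefix_cost_add (prefix_cost_ext low).
rewrite (@prefix_cost_ext n (shift (shift g i) a) (shift (shift f i) b)); first lia.
by move=> j _; rewrite !shift_shift /shift high.
Qed.

Lemma prefix_cost1 f : prefix_cost 1 f = cost (f 0).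
Proof. exact: big_ord1. Qed.

Lemma prefix_cost2 f : prefix_cost 2 f = cost (f 0) + cost (f 1).
Proof. by rewrite /prefix_cost big_ord_recr big_ord1. Qed.

Lemma prefix_cost_join_at i f N : i < N -> prefix_cost N (join_at i f) <= prefix_cost N.+1 f + 1.
Proof.
move=> lt_iN.
have low j : j < i -> join_at i f j = f j by rewrite /join_at => ->.
have high j : join_at i f (i + 1 + j) = f (i + 2 + j).
  by rewrite /join_at; case_ifs; try (exfalso; lia); congr f; lia.
have := prefix_cost_splice (N - i.+1) low high.
rewrite (_ : i + 1 + _ = N); last lia.
rewrite (_ : i + 2 + _ = N.+1); last lia.
rewrite prefix_cost1 prefix_cost2.
rewrite /shift /join_at addn0 addn1 ltnn eqxx.
have := cost_join (f i) (f i.+1); lia.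
Qed.

Lemma prefix_cost_split_at i f N : i < N -> prefix_cost N.+1 (split_at i f) <= prefix_cost N f + 1.
Proof.
move=> lt_iN.
have low j : j < i -> split_at i f j = f j by rewrite /split_at => ->.
have high j : split_at i f (i + 2 + j) = f (i + 1 + j).
  by rewrite /split_at; case_ifs; try (exfalso; lia); congr f; lia.
have := prefix_cost_splice (N - i.+1) low high.
rewrite (_ : i + 1 + _ = N); last lia.
rewrite (_ : i + 2 + _ = N.+1); last lia.
rewrite prefix_cost1 prefix_cost2.
rewrite /shift /split_at addn0 addn1 ltnn eqxx ltnNge leqnSn eqn_leq ltnn /= eqxx.
have := cost_split (f i); lia.
Qed.

Lemma act_unit_forest_cost u :
  exists M, cost_free_from (act u unit_forest) M /\ prefix_cost M (act u unit_forest) <= size u.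
Proof.
elim: u => [|[i b] u [M [free cost_M]]] /=; first by exists 0; rewrite prefix_cost0.
set f := act u unit_forest in free cost_M *.
have le_M N : M <= N -> prefix_cost N f <= size u by move=> ?; rewrite (prefix_cost_free free).
rewrite /act_letter /=; case: b.
- exists (maxn M i).+1; split.
    by move=> j le_j; rewrite /join_at; case_ifs; try (exfalso; lia); apply: free; lia.
  have := @prefix_cost_join_at i f (maxn M i).+1; have := le_M (maxn M i).+2; lia.
- exists (maxn M i).+2; split.
    by move=> j le_j; rewrite /split_at; case_ifs; try (exfalso; lia); apply: free; lia.
  have := @prefix_cost_split_at i f (maxn M i).+1; have := le_M (maxn M i).+1; lia.
Qed.

Lemma feq_prefix_cost_le u v N : feq u v -> cost_free_from (act v unit_forest) N ->
  prefix_cost N (act v unit_forest) <= size u.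
Proof.
move=> eq_uv; rewrite -(act_feq eq_uv (_ : reduced_forest unit_forest)) // => free_N.
have [M [free_M cost_M]] := act_unit_forest_cost u.
rewrite -(prefix_cost_free free_N (leq_maxr M N)) (prefix_cost_free free_M (leq_maxl M N)).
exact: cost_M.
Qed.

Fixpoint graft (t : tree) (y : forest) : dtree :=
  if t is Node a b then join (graft a y) (graft b (shift y (leaves a))) else y 0.

Lemma graft_ext t y y' : (forall j, j < leaves t -> y j = y' j) -> graft t y = graft t y'.
Proof.
elim: t y y' => [|a IHa b IHb] y y' eq_y /=; first exact: eq_y.
congr join; first by apply: IHa => j lt_j; apply: eq_y => /=; lia.
by apply: IHb => j lt_j; apply: eq_y => /=; lia.
Qed.

Definition graft_at (t : tree) (o : nat) (f : forest) : forest := fun j =>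
  if j < o then f j else if j == o then graft t (shift f o) else f (j + (leaves t).-1).

Lemma act_caret_word t o f : act (caret_word t o) f = graft_at t o f.
Proof.
elim: t o f => [|a IHa b IHb] o f; apply: functional_extensionality => j.
  by rewrite /graft_at /=; case_ifs; subst_eqs; rewrite /shift ?addn0.
rewrite /= act_cat IHb IHa /act_letter /= /join_at /graft_at.
have leaves_a := leaves_gt0 a; have leaves_b := leaves_gt0 b.
case_ifs; try (exfalso; lia); subst_eqs => //; last by congr f => /=; lia.
congr join; last by rewrite shift_shift.
by apply: graft_ext => j lt_j; rewrite /shift; case_ifs => //; exfalso; lia.
Qed.

Fixpoint arm_act (t : tree) (o : nat) (f : forest) : forest :=
  if t is Node l r then graft_at l o (arm_act r (o + leaves l) f) else f.

Lemma act_arm_word t o f : act (arm_word t o) f = arm_act t o f.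
Proof. by elim: t o f => //= l _ r IH o f; rewrite act_cat IH act_caret_word. Qed.

Fixpoint arm_length (t : tree) : nat := if t is Node _ r then (arm_length r).+1 else 0.

Lemma arm_length_le_nodes t : arm_length t <= nodes t.
Proof. elim: t => //= l _ r IH; lia. Qed.

Lemma arm_act_low t o f j : j < o -> arm_act t o f j = f j.
Proof. by elim: t o f => //= l _ r IH o f lt_jo; rewrite /graft_at lt_jo IH //; lia. Qed.

Lemma arm_act_high t o f j : o + arm_length t <= j ->
  arm_act t o f j = f (j + nodes t - arm_length t).
Proof.
elim: t o f j => [|l _ r IH] o f j /=; first by rewrite !addn0 subn0.
move=> le_j; rewrite /graft_at; case_ifs; try (exfalso; lia).
rewrite IH; last by have := leaves_gt0 l; lia.
by congr f; have := arm_length_le_nodes r; rewrite leaves_nodes; lia.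
Qed.

Fixpoint arm_cost (t : tree) (g : forest) : nat :=
  if t is Node l r then cost (graft l g) + arm_cost r (shift g (leaves l)) else 0.

Lemma prefix_cost_arm_act t o f :
  prefix_cost (o + arm_length t) (arm_act t o f) = prefix_cost o f + arm_cost t (shift f o).
Proof.
elim: t o f => [|l _ r IH] o f /=; first by rewrite !addn0.
have := leaves_gt0 l => leaves_l.
have low j : j < o + leaves l -> arm_act r (o + leaves l) f j = f j by apply: arm_act_low.
rewrite -addSnnS -addn1 -addnA !prefix_cost_add.
have -> : prefix_cost o (graft_at l o (arm_act r (o + leaves l) f)) = prefix_cost o f.
  by apply: prefix_cost_ext => j lt_j; rewrite /graft_at lt_j low //; lia.
have -> : prefix_cost 1 (shift (graft_at l o (arm_act r (o + leaves l) f)) o) =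
          cost (graft l (shift f o)).
  rewrite /prefix_cost big_ord1 /shift /graft_at addn0 ltnn eqxx.
  by congr cost; apply: graft_ext => j lt_j; rewrite /shift low //; lia.
rewrite (@prefix_cost_ext (arm_length r) _ (shift (arm_act r (o + leaves l) f) (o + leaves l))).
  have := IH (o + leaves l) f; rewrite prefix_cost_add.
  rewrite (@prefix_cost_ext _ (arm_act _ _ _) f) => [|j lt_j]; last exact: low.
  by rewrite prefix_cost_add shift_shift; lia.
move=> j _; rewrite /shift /graft_at; case_ifs; try (exfalso; lia).
by congr arm_act; lia.
Qed.

(* [leaf_label t k s j] is the interval at the [j]-th leaf when the interval
   [DLeaf k s] is bisected along [t]. *)
Fixpoint leaf_label (t : tree) (k : nat) (s : seq bool) (j : nat) : dtree :=
  if t is Node a b then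
    if j < leaves a then leaf_label a k (false :: s) j
    else leaf_label b k (true :: s) (j - leaves a)
  else DLeaf k s.

(* The left subtrees of the right arm of [t] subdivide the successive unit
   intervals: the image of the trivial forest under [arm_word t 0]^-1. *)
Fixpoint tree_forest (t : tree) (m : nat) (j : nat) : dtree :=
  if t is Node l r then
    if j < leaves l then leaf_label l m [::] j else tree_forest r m.+1 (j - leaves l)
  else DLeaf (m + j) [::].

(* The leaf after the rightmost descendant of a left child is the leftmost
   descendant of its right sibling. *)
Definition successor_adjacent (g : forest) : Prop :=
  forall j k q v, g j = DLeaf k (nseq q true ++ false :: v) ->
  exists r, g j.+1 = DLeaf k (nseq r false ++ true :: v).

Lemma nseqS_cat (x : bool) r s : nseq r x ++ x :: s = nseq r.+1 x ++ s.
Proof. by elim: r => //= r ->. Qed.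

Lemma cat_cons_suffix_eq (p1 p2 : seq bool) x y s : p1 ++ x :: s = p2 ++ y :: s -> x = y.
Proof.
move=> eq_p; have := congr1 size eq_p; rewrite !size_cat /= => /addIn eq_size.
by have := congr1 (drop (size p1)) eq_p; rewrite drop_size_cat // eq_size drop_size_cat // => -[].
Qed.

Lemma nseq_true_false_inj q q' v v' :
  nseq q true ++ false :: v = nseq q' true ++ false :: v' -> v = v'.
Proof. by elim: q q' => [|q IH] [|q'] //= => [[]|[/IH]]. Qed.

Lemma nseq_true_neq q q' v : nseq q true <> nseq q' true ++ false :: v.
Proof.
move=> eq_q; have : false \in nseq q true by rewrite eq_q mem_cat in_cons eqxx orbT.
by rewrite mem_nseq; case: q {eq_q}.
Qed.

Lemma leaf_label_suffix t k s j : exists p, leaf_label t k s j = DLeaf k (p ++ s).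
Proof.
elim: t s j => [|a IHa b IHb] s j /=; first by exists [::].
case: ifP => _; [have [p ->] := IHa (false :: s) j; exists (rcons p false)
  | have [p ->] := IHb (true :: s) (j - leaves a); exists (rcons p true)].
all: by rewrite cat_rcons.
Qed.

Lemma leaf_label_first t k s : exists r, leaf_label t k s 0 = DLeaf k (nseq r false ++ s).
Proof.
elim: t s => [|a IHa b _] s /=; first by exists 0.
by rewrite leaves_gt0; have [r ->] := IHa (false :: s); exists r.+1; rewrite nseqS_cat.
Qed.

Lemma leaf_label_last t k s :
  exists q, leaf_label t k s (leaves t).-1 = DLeaf k (nseq q true ++ s).
Proof.
elim: t s => [|a _ b IHb] s /=; first by exists 0.
have := leaves_gt0 a; have := leaves_gt0 b => leaves_b leaves_a.
rewrite (_ : (leaves a + leaves b).-1 < leaves a = false); last by lia.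
rewrite (_ : (leaves a + leaves b).-1 - leaves a = (leaves b).-1); last by lia.
by have [q ->] := IHb (true :: s); exists q.+1; rewrite nseqS_cat.
Qed.

Lemma leaf_label_not_last t k s j : j.+1 < leaves t ->
  exists q v, leaf_label t k s j = DLeaf k (nseq q true ++ false :: v).
Proof.
elim: t s j => [|a IHa b IHb] s j /= lt_j; first by lia.
case: (ltnP j.+1 (leaves a)) => lt_ja; first by rewrite (ltnW lt_ja); apply: IHa.
case: (ltnP j (leaves a)) => lt_j'; last by apply: IHb; lia.
rewrite (_ : j = (leaves a).-1); last by lia.
by have [q ->] := leaf_label_last a k (false :: s); exists q, s.
Qed.

Lemma leaf_label_succ t k s j q v : j.+1 < leaves t ->
  leaf_label t k s j = DLeaf k (nseq q true ++ false :: v) ->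
  exists r, leaf_label t k s j.+1 = DLeaf k (nseq r false ++ true :: v).
Proof.
elim: t s j => [|a IHa b IHb] s j /= lt_j; first by lia.
case: (ltnP j.+1 (leaves a)) => lt_ja; first by rewrite (ltnW lt_ja); apply: IHa.
case: (ltnP j (leaves a)) => lt_j'; last by rewrite subSn //; apply: IHb; lia.
have eq_j : j = (leaves a).-1 by lia.
rewrite (_ : j.+1 - leaves a = 0); last by lia.
have [q0 last_a] := leaf_label_last a k (false :: s); rewrite -eq_j in last_a.
rewrite last_a => -[/nseq_true_false_inj <-].
by have [r ->] := leaf_label_first b k (true :: s); exists r.
Qed.

Lemma tree_forest_leaf t m j : exists k s, tree_forest t m j = DLeaf k s.
Proof.
elim: t m j => [|l _ r IH] m j /=; first by exists (m + j), [::].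
by case: ifP => _ //; have [p ->] := leaf_label_suffix l m [::] j; exists m, (p ++ [::]).
Qed.

Lemma tree_forest_tail t m j : nodes t <= j -> exists k, tree_forest t m j = DLeaf k [::].
Proof.
elim: t m j => [|l _ r IH] m j /=; first by exists (m + j).
by rewrite leaves_nodes => le_j; case: ifP => lt_j; [lia | apply: IH; lia].
Qed.

Lemma tree_forest_index t m j k s : tree_forest t m j = DLeaf k s -> m <= k.
Proof.
elim: t m j => [|l _ r IH] m j /=; first by case=> <- _; lia.
case: ifP => _; last by move/IH; lia.
by have [p ->] := leaf_label_suffix l m [::] j; case=> ->.
Qed.

Lemma tree_forest_successor_adjacent t m : successor_adjacent (tree_forest t m).
Proof.
elim: t m => [|l _ r IH] m j k q v /=; first by case=> _ /esym; case: q.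
have leaves_l := leaves_gt0 l.
case: (ltnP j.+1 (leaves l)) => lt_jl.
  rewrite (ltnW lt_jl) => eq_j.
  have eq_km : k = m by move: eq_j; have [p ->] := leaf_label_suffix l m [::] j; case.
  by subst k; apply: leaf_label_succ lt_jl eq_j.
case: (ltnP j (leaves l)) => lt_j'; last by rewrite subSn //; apply: IH.
have [q0 last_l] := leaf_label_last l m [::].
rewrite (_ : j = (leaves l).-1) ?last_l ?cats0; last by lia.
by case=> _ /nseq_true_neq.
Qed.

Definition is_node (t : dtree) : bool := if t is DNode _ _ then true else false.

Lemma not_node t : ~~ is_node t -> exists k s, t = DLeaf k s.
Proof. by case: t => // k s; exists k, s. Qed.

Lemma join_node a b : is_node (join a b) -> join a b = DNode a b.
Proof.
rewrite /join; case sib: (siblings a b) => //.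
by case: a b sib => [k [|[] s]|? ?] [k' [|[] s']|? ?].
Qed.

Lemma join_leaf a b k s : join a b = DLeaf k s ->
  a = DLeaf k (false :: s) /\ b = DLeaf k (true :: s).
Proof.
rewrite /join; case sib: (siblings a b) => //.
case: a b sib => [k1 [|[] s1]|? ?] [k2 [|[] s2]|? ?] //= /andP[/eqP <- /eqP <-].
by case=> <- <-.
Qed.

Lemma graft_leaf_first t z k s : graft t z = DLeaf k s ->
  exists r, z 0 = DLeaf k (nseq r false ++ s).
Proof.
elim: t z s => [|a IHa b _] z s /=; first by exists 0.
by case/join_leaf => /IHa [r ->] _; exists r.+1; rewrite nseqS_cat.
Qed.

Lemma graft_leaf_last t z k s : graft t z = DLeaf k s ->
  exists q, z (leaves t).-1 = DLeaf k (nseq q true ++ s).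
Proof.
elim: t z s => [|a _ b IHb] z s /=; first by exists 0.
case/join_leaf => _ /IHb [q eq_q]; exists q.+1; rewrite -nseqS_cat -eq_q /shift.
by congr z; have := leaves_gt0 a; have := leaves_gt0 b; lia.
Qed.

Lemma graft_leaf_all t z k s : graft t z = DLeaf k s ->
  forall j, j < leaves t -> exists p, z j = DLeaf k (p ++ s).
Proof.
elim: t z s => [|a IHa b IHb] z s /=.
  by move=> z0 j lt_j; exists [::]; rewrite (_ : j = 0) //; lia.
case/join_leaf => [graft_a graft_b] j lt_j; case: (ltnP j (leaves a)) => lt_ja.
  by have [p ->] := IHa _ _ graft_a j lt_ja; exists (rcons p false); rewrite cat_rcons.
have [p eq_p] : exists p, shift z (leaves a) (j - leaves a) = DLeaf k (p ++ true :: s).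
  by apply: IHb graft_b _ _; lia.
by exists (rcons p true); rewrite cat_rcons -eq_p /shift subnKC.
Qed.

Lemma graft_leaf_label t z k s : (forall j, j < leaves t -> z j = leaf_label t k s j) ->
  graft t z = DLeaf k s.
Proof.
elim: t z s => [|a IHa b IHb] z s /= eq_z; first exact: eq_z.
rewrite (IHa z (false :: s)) => [|j lt_j]; last by rewrite eq_z ?lt_j //; lia.
rewrite (IHb _ (true :: s)) => [|j lt_j]; first by rewrite /join /= !eqxx.
rewrite /shift eq_z; last by lia.
by rewrite (_ : leaves a + j < leaves a = false) ?addKn //; lia.
Qed.

Lemma graft_leaf_inj A B z k s : graft A z = DLeaf k s ->
  (forall j, j < leaves B -> z j = leaf_label B k s j) -> leaves A = leaves B -> A = B.
Proof.
elim: A B z k s => [|a IHa b IHb] [|c d] z k s //=.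
- by have := leaves_gt0 c; have := leaves_gt0 d; lia.
- by have := leaves_gt0 a; have := leaves_gt0 b; lia.
case/join_leaf => graft_a graft_b eq_z eq_leaves.
have eq_ac : leaves a = leaves c.
  case: (ltngtP (leaves a) (leaves c)) => // lt_ac.
  - have [r first_b] := graft_leaf_first graft_b.
    rewrite /shift addn0 eq_z /= ?lt_ac in first_b; last by lia.
    have [p eq_p] := leaf_label_suffix c k (false :: s) (leaves a).
    by rewrite eq_p in first_b; case: first_b => /cat_cons_suffix_eq.
  - have [p eq_p] := graft_leaf_all graft_a lt_ac.
    rewrite eq_z /= ?ltnn ?subnn in eq_p; last by lia.
    have [p' eq_p'] := leaf_label_suffix d k (true :: s) 0.
    by rewrite eq_p' in eq_p; case: eq_p => /cat_cons_suffix_eq.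
congr Node.
  by apply: IHa graft_a _ eq_ac => j lt_j; rewrite eq_z -?eq_ac ?lt_j //; lia.
apply: IHb graft_b _ _ => [j lt_j|]; last by lia.
rewrite /shift eq_z; last by lia.
by rewrite (_ : leaves a + j < leaves c = false) ?eq_ac ?addKn //; lia.
Qed.

Lemma arm_act_tree_forest t m o f : (forall j, f (o + j) = tree_forest t m j) ->
  arm_act t o f = fun j => if j < o then f j else DLeaf (m + (j - o)) [::].
Proof.
elim: t m o f => [|l _ r IH] m o f eq_f /=.
  apply: functional_extensionality => j; case: ifP => // lt_j.
  by rewrite -{1}[j](@subnKC o) ?eq_f //; lia.
rewrite (IH m.+1 (o + leaves l) f); last first.
  by move=> j; rewrite -addnA eq_f /= (_ : leaves l + j < leaves l = false) ?addKn //; lia.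
have leaves_l := leaves_gt0 l.
apply: functional_extensionality => j; rewrite /graft_at; case_ifs; try (exfalso; lia); subst_eqs.
- by [].
- rewrite (@graft_leaf_label l _ m [::]) ?subnn ?addn0 // => j lt_j.
  by rewrite /shift; case_ifs; try (exfalso; lia); rewrite eq_f /= lt_j.
- by congr DLeaf; lia.
Qed.

Lemma reduced_tree_forest t m : reduced_forest (tree_forest t m).
Proof. by move=> j; have [k [s ->]] := tree_forest_leaf t m j. Qed.

Lemma act_inv_arm_word t : act (inv_word (arm_word t 0)) unit_forest = tree_forest t 0.
Proof.
rewrite -[in RHS](act_inv_word (arm_word t 0) (reduced_tree_forest t 0)).
congr act; rewrite act_arm_word (@arm_act_tree_forest t 0 0) //.
by apply: functional_extensionality => j; rewrite subn0.
Qed.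

Lemma act_tpd_word T1 T2 :
  act (tpd_word T1 T2) unit_forest = arm_act T2 0 (tree_forest T1 0).
Proof. by rewrite tpd_wordE act_cat act_inv_arm_word act_arm_word. Qed.

Lemma arm_cost_le_word_length T1 T2 u : nodes T1 = nodes T2 ->
  feq u (tpd_word T1 T2) -> arm_cost T2 (tree_forest T1 0) <= size u.
Proof.
move=> eq_nodes eq_u.
have free : cost_free_from (act (tpd_word T1 T2) unit_forest) (arm_length T2).
  move=> j le_j; rewrite act_tpd_word arm_act_high //.
  have [|k ->] // := @tree_forest_tail T1 0 (j + nodes T2 - arm_length T2).
  by have := arm_length_le_nodes T2; lia.
have := feq_prefix_cost_le eq_u free.
by rewrite act_tpd_word -[arm_length T2]add0n prefix_cost_arm_act prefix_cost0 shift0.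
Qed.

(** * Descent along the right arm *)

Fixpoint arm_has_node (t : tree) (g : forest) : bool :=
  if t is Node l r then is_node (graft l g) || arm_has_node r (shift g (leaves l)) else false.

Lemma arm_cost_Node l r g :
  arm_cost (Node l r) g = cost (graft l g) + arm_cost r (shift g (leaves l)).
Proof. by []. Qed.

Definition all_leaves (g : forest) : Prop := forall j, ~~ is_node (g j).

Lemma successor_adjacent_shift g a : successor_adjacent g -> successor_adjacent (shift g a).
Proof. by move=> adj j k q v; rewrite /shift addnS; apply: adj. Qed.

Lemma nseq_false_cat_inj r r' s s' : nseq r false ++ s = nseq r' false ++ s' ->
  left_depth s = 0 -> left_depth s' = 0 -> s = s'.
Proof.
move=> + ds ds'; elim: r r' => [|r IH] [|r'] //=.
- by move=> eq_s; rewrite eq_s in ds.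
- by move=> eq_s; rewrite -eq_s in ds'.
- by case=> /IH.
Qed.

Lemma rotate_right_lowers_cost T g : all_leaves g -> arm_has_node T g ->
  exists T', ra_step T T' /\ arm_cost T' g < arm_cost T g.
Proof.
elim: T g => [|l _ r IH] g leaves_g //=.
case node_l: (is_node (graft l g)) => /=.
  case: l node_l => [|a b] /= node_l _; first by move: (leaves_g 0); rewrite node_l.
  exists (Node a (Node b r)); split; first by apply: RAroot; constructor.
  by rewrite /= (join_node node_l) /= !shift_shift; lia.
case/(IH (shift g (leaves l)) (fun j => leaves_g _)) => r' [step lt_cost].
by exists (Node l r'); split; [apply: RAright | rewrite /=; lia].
Qed.

Lemma graft_siblings l l' g k s k' s' : successor_adjacent g ->
  graft l g = DLeaf k (false :: s) -> graft l' (shift g (leaves l)) = DLeaf k' s' ->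
  left_depth s' = 0 -> graft (Node l l') g = DLeaf k s.
Proof.
move=> adj graft_l graft_l' depth0.
have [q last_l] := graft_leaf_last graft_l.
have [r next] := adj _ _ _ _ last_l.
have [r' first_l'] := graft_leaf_first graft_l'.
rewrite /shift addn0 -[leaves l](@ltn_predK 0) ?leaves_gt0 // next in first_l'.
case: first_l' => eq_k /nseq_false_cat_inj/(_ erefl depth0) eq_s'; subst k' s'.
by rewrite /= graft_l graft_l' /join /= !eqxx.
Qed.

Lemma rotate_left_lowers_cost T g : all_leaves g -> successor_adjacent g ->
  (forall j, nodes T <= j -> exists k, g j = DLeaf k [::]) ->
  ~~ arm_has_node T g -> 0 < arm_cost T g ->
  exists T', ra_step T T' /\ arm_cost T' g < arm_cost T g.
Proof.
elim: T g => [|l _ r IH] g leaves_g adj tail //=; rewrite negb_or => /andP[leaf_l no_node].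
case: (posnP (arm_cost r (shift g (leaves l)))) => cost_r cost_pos; last first.
  have [|r' [step lt_cost]] := IH (shift g (leaves l)) (fun j => leaves_g _)
    (@successor_adjacent_shift g (leaves l) adj) _ no_node cost_r.
    by move=> j le_j; apply: tail; rewrite leaves_nodes /=; lia.
  by exists (Node l r'); split; [apply: RAright | rewrite /=; lia].
have [k [[|[] s] graft_l]] := not_node leaf_l; rewrite cost_r graft_l /= in cost_pos *; try lia.
case: r IH no_node cost_r tail => [|l' r] _ /=.
  move=> _ _ tail; have [q last_l] := graft_leaf_last graft_l.
  have [r' next] := adj _ _ _ _ last_l.
  have [|k' tail_l] := tail (leaves l); first by rewrite leaves_nodes /=; lia.
  by rewrite (ltn_predK (leaves_gt0 l)) tail_l in next; case: next => _ /esym; case: r'.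
rewrite negb_or => /andP[leaf_l' _] cost_r _.
have [k' [s' graft_l']] := not_node leaf_l'.
have depth0 : left_depth s' = 0 by move: cost_r; rewrite graft_l' /=; lia.
exists (Node (Node l l') r); split; first by apply: RAroot; constructor.
rewrite arm_cost_Node (graft_siblings adj graft_l graft_l' depth0) /=.
by move: cost_r; rewrite shift_shift; lia.
Qed.

Lemma cost0_leaf t : cost t = 0 -> exists k s, t = DLeaf k s /\ left_depth s = 0.
Proof. by case: t => // k s depth0; exists k, s. Qed.

Lemma tree_forest_shift l r m : shift (tree_forest (Node l r) m) (leaves l) = tree_forest r m.+1.
Proof.
apply: functional_extensionality => j.
by rewrite /shift /= (_ : leaves l + j < leaves l = false) ?addKn //; lia.
Qed.

Lemma graft_tree_forest_head l l1 r1 m k s :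
  graft l (tree_forest (Node l1 r1) m) = DLeaf k s -> left_depth s = 0 -> l = l1.
Proof.
move=> graft_l depth0; have leaves_l := leaves_gt0 l; have leaves_l1 := leaves_gt0 l1.
have [a first_l] := graft_leaf_first graft_l.
have [b first_l1] := leaf_label_first l1 m [::].
rewrite /= leaves_l1 first_l1 in first_l.
case: first_l => eq_k /nseq_false_cat_inj/(_ erefl depth0) eq_s; subst k s.
apply: (graft_leaf_inj graft_l) => [j lt_j|]; first by rewrite /= lt_j.
case: (ltngtP (leaves l) (leaves l1)) => // cmp.
- have [q last_l] := graft_leaf_last graft_l.
  have [|q' [v not_last]] := @leaf_label_not_last l1 m [::] (leaves l).-1; first by lia.
  rewrite /= (_ : (leaves l).-1 < leaves l1) ?not_last ?cats0 in last_l; last by lia.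
  by case: last_l => /esym eq_q; case: (nseq_true_neq eq_q).
- have [p in_l] := graft_leaf_all graft_l cmp.
  by rewrite /= ltnn subnn in in_l; have := tree_forest_index in_l; lia.
Qed.

Lemma arm_cost0_eq T T1 m : arm_cost T (tree_forest T1 m) = 0 -> nodes T = nodes T1 -> T = T1.
Proof.
elim: T T1 m => [|l _ r IH] [|l1 r1] m //= /eqP; rewrite addn_eq0 => /andP[/eqP cost_l /eqP cost_r].
have [k [s [graft_l depth0]]] := cost0_leaf cost_l.
have eq_l := graft_tree_forest_head graft_l depth0; subst l1.
by rewrite tree_forest_shift in cost_r => -[eq_nodes]; rewrite (IH r1 m.+1) //; lia.
Qed.

Lemma rotation_lowers_arm_cost T T1 m : nodes T = nodes T1 ->
  0 < arm_cost T (tree_forest T1 m) ->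
  exists T', ra_step T T' /\ arm_cost T' (tree_forest T1 m) < arm_cost T (tree_forest T1 m).
Proof.
move=> eq_nodes cost_pos.
have leaves_g : all_leaves (tree_forest T1 m).
  by move=> j; have [k [s ->]] := tree_forest_leaf T1 m j.
have [node|no_node] := boolP (arm_has_node T (tree_forest T1 m)).
  exact: rotate_right_lowers_cost.
apply: rotate_left_lowers_cost => //; first exact: tree_forest_successor_adjacent.
by move=> j; rewrite eq_nodes; apply: tree_forest_tail.
Qed.

Lemma ra_path_to_tree T T1 m : nodes T = nodes T1 ->
  exists2 k, k <= arm_cost T (tree_forest T1 m) & ra_path k T T1.
Proof.
have [N] := ubnP (arm_cost T (tree_forest T1 m)); elim: N T => // N IH T lt_cost eq_nodes.
have [cost0|cost_pos] := posnP (arm_cost T (tree_forest T1 m)).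
  by exists 0; rewrite // (arm_cost0_eq cost0 eq_nodes); apply: RAP0.
have [T' [step lt_step]] := rotation_lowers_arm_cost eq_nodes cost_pos.
have lt_N : arm_cost T' (tree_forest T1 m) < N by lia.
have [k le_k path] := IH T' lt_N (etrans (ra_step_nodes step) eq_nodes).
by exists k.+1; [lia | apply: RAPS step path].
Qed.

Theorem proposition3p7 (n : nat) (T1 T2 : tree) :
  nodes T1 = n -> nodes T2 = n ->
  exists d : nat, ra_dist_is T1 T2 d /\ wlen_is (tpd_word T1 T2) d.
Proof.
move=> nodes_T1 nodes_T2; have eq_nodes : nodes T1 = nodes T2 by rewrite nodes_T1.
have lower u := @arm_cost_le_word_length T1 T2 u eq_nodes.
have [k le_k path] := @ra_path_to_tree T2 T1 0 (esym eq_nodes).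
have [u [size_u eq_u]] := ra_path_tpd_word (ra_path_sym path).
have eq_k : k = arm_cost T2 (tree_forest T1 0) by have := lower u eq_u; lia.
exists k; split; split.
- exact: ra_path_sym.
- by move=> k' /ra_path_tpd_word [u' [<- /lower]]; lia.
- by exists u.
- by move=> u' /lower; lia.
Qed.
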